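(* Let $\mathcal G$ be an étale groupoid and $K$ a compact subset of $\mathcal G$. Regard $\mathcal G$ as a left $\mathcal G$-space via multiplication (anchor map $r$), and let \[\Delta_K(\mathcal G)=\{\delta\subseteq\mathcal G\text{ finite nonempty}:\forall\gamma_1,\gamma_2\in\delta,\ r(\gamma_1)=r(\gamma_2),\ \gamma_1^{-1}\gamma_2\in K\}.\] Then (1) $(\mathcal G,\Delta_K(\mathcal G))$ is a finite-dimensional $\mathcal G$-simplicial complex; (2) it satisfies hypotheses $(H_1)$ and $(H_2)$; (3) it is proper and $\mathcal G$-compact.
   Context: Étale groupoids are locally compact Hausdorff with range map a local homeomorphism. A $\mathcal G$-simplicial complex is a pair $(Y,\Delta)$ with $Y$ a locally compact Hausdorff left $\mathcal G$-space whose anchor $\rho$ is a local homeomorphism, and $\Delta$ a family of finite nonempty subsets of $Y$, each contained in a fibre of $\rho$, closed under nonempty subsets and under $\delta\mapsto\gamma\delta$ (for $\delta\subseteq\rho^{-1}(s(\gamma))$); it is finite-dimensional if the cardinalities of elements of $\Delta$ are bounded. $(H_1)$: for every compact $K'\subseteq Y$, $\{y:\exists y'\in K',\{y,y'\}\in\Delta\}$ is compact. $(H_2)$: if nets $(y^{(i)}_\lambda)_\lambda$ converge to $y^{(i)}$ ($0\le i\le k$) and $\{y^{(0)}_\lambda,\dots,y^{(k)}_\lambda\}\in\Delta$ for all $\lambda$, then $\{y^{(0)},\dots,y^{(k)}\}\in\Delta$. $(Y,\Delta)$ is proper if the action on $Y$ is proper, and $\mathcal G$-compact if $\{y:\{y\}\in\Delta\}$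 equals $\mathcal GC$ for some compact $C$. *)

From HB Require Import structures.
From mathcomp Require Import all_boot all_order all_algebra.
From mathcomp Require Import all_classical all_reals all_analysis.
Set Implicit Arguments. Unset Strict Implicit. Unset Printing Implicit Defensive.
Import Order.TTheory GRing.Theory Num.Theory.
Local Open Scope classical_set_scope.

(* A local homeomorphism onto an open image: f is continuous, and every point
   has an open neighbourhood U on which f is injective and maps open subsets
   of U to open sets (so f restricted to U is a homeomorphism onto the open
   set f(U)). *)
Definition local_homeo (T U : topologicalType) (f : T -> U) : Prop :=
  continuous f /\
  forall t, exists V : set T, [/\ open V, V t, {in V &, injective f} &
     forall W, open W -> W `<=` V -> open (f @` W)].

(* Etale groupoid with arrow space G and unit space X (u : X -> G is the unit
   inclusion, which is automatically a homeomorphism onto its image since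
   r \o u = id).  Multiplication is a total function on G * G; only its values
   on composable pairs (s g = r h) matter. *)
Definition etale_groupoid (G X : topologicalType) (r s : G -> X) (u : X -> G)
    (inv : G -> G) (mul : G -> G -> G) : Prop :=
  [/\ (forall x, r (u x) = x /\ s (u x) = x),
      (forall g h, s g = r h -> r (mul g h) = r g /\ s (mul g h) = s h),
      (forall g h k, s g = r h -> s h = r k -> mul (mul g h) k = mul g (mul h k)),
      (forall g, mul (u (r g)) g = g /\ mul g (u (s g)) = g) &
      (forall g, [/\ r (inv g) = s g, s (inv g) = r g,
                   mul g (inv g) = u (r g) & mul (inv g) g = u (s g)])] /\
    [/\ hausdorff_space G /\ locally_compact [set: G],
        hausdorff_space X /\ locally_compact [set: X],
      [/\ continuous r, continuous s, continuous u & continuous inv],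
      {within [set p : G * G | s p.1 = r p.2], continuous (fun p => mul p.1 p.2)}
      & local_homeo r].

(* Left G-space Y with anchor rho : Y -> X (a local homeomorphism) and action
   act, a total function whose values matter only when s g = rho y. *)
Definition G_space (G X : topologicalType) (r s : G -> X) (u : X -> G)
    (mul : G -> G -> G) (Y : topologicalType) (rho : Y -> X)
    (act : G -> Y -> Y) : Prop :=
  [/\ hausdorff_space Y /\ locally_compact [set: Y], local_homeo rho,
      {within [set p : G * Y | s p.1 = rho p.2], continuous (fun p => act p.1 p.2)},
      (forall g y, s g = rho y -> rho (act g y) = r g) &
      (forall y, act (u (rho y)) y = y) /\
      (forall g h y, s g = r h -> s h = rho y -> act (mul g h) y = act g (act h y))].

Definition G_simplicial_complex (G X : topologicalType) (r s : G -> X)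
    (u : X -> G) (mul : G -> G -> G) (Y : topologicalType) (rho : Y -> X)
    (act : G -> Y -> Y) (Delta : set (set Y)) : Prop :=
  [/\ G_space r s u mul rho act,
      (forall d, Delta d -> finite_set d /\ d !=set0),
      (forall d, Delta d -> exists x, d `<=` rho @^-1` [set x]),
      (forall d d', Delta d -> d' `<=` d -> d' !=set0 -> Delta d') &
      (forall g d, Delta d -> d `<=` rho @^-1` [set s g] -> Delta (act g @` d))].

Definition finite_dimensional (Y : Type) (Delta : set (set Y)) : Prop :=
  exists n : nat, forall d, Delta d -> (d #<= `I_n)%card.

Definition H1 (Y : topologicalType) (Delta : set (set Y)) : Prop :=
  forall K' : set Y, compact K' ->
    compact [set y | exists2 y', K' y' & Delta [set y; y']].

Definition directed_set (L : Type) (le : L -> L -> Prop) : Prop :=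
  [/\ (exists l : L, True), (forall l, le l l),
      (forall a b c, le a b -> le b c -> le a c) &
      (forall a b, exists c, le a c /\ le b c)].

Definition net_converges (L : Type) (le : L -> L -> Prop) (Y : topologicalType)
    (x : L -> Y) (y : Y) : Prop :=
  forall U, nbhs y U -> exists l0, forall l, le l0 l -> U (x l).

Definition H2 (Y : topologicalType) (Delta : set (set Y)) : Prop :=
  forall (k : nat) (L : Type) (le : L -> L -> Prop)
         (net : 'I_k.+1 -> L -> Y) (lim : 'I_k.+1 -> Y),
    directed_set le ->
    (forall i, net_converges le (net i) (lim i)) ->
    (forall l, Delta [set net i l | i in [set: 'I_k.+1]]) ->
    Delta [set lim i | i in [set: 'I_k.+1]].

Definition proper_action (G X : topologicalType) (s : G -> X)
    (Y : topologicalType) (rho : Y -> X) (act : G -> Y -> Y) : Prop :=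
  forall C : set (Y * Y), compact C ->
    compact [set p : G * Y | s p.1 = rho p.2 /\ C (act p.1 p.2, p.2)].

Definition G_compact (G X : topologicalType) (s : G -> X)
    (Y : topologicalType) (rho : Y -> X) (act : G -> Y -> Y)
    (Delta : set (set Y)) : Prop :=
  exists2 C : set Y, compact C &
    [set y | Delta [set y]] = [set y | exists g c, [/\ C c, s g = rho c & y = act g c]].

Definition Delta_K (G X : topologicalType) (r : G -> X) (inv : G -> G)
    (mul : G -> G -> G) (K : set G) : set (set G) :=
  [set d : set G | [/\ finite_set d, d !=set0 &
     forall g1 g2, d g1 -> d g2 -> r g1 = r g2 /\ K (mul (inv g1) g2)]].

(** A simplex of [Delta_K] is a finite subset of an [r]-fibre whose "differences"
    [g1^-1 g2] lie in [K]. These conditions are closed and stable under left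
    translation, which gives the simplicial-complex axioms and (H2). Left
    translation by [g^-1], for a vertex [g], injects a simplex into a single
    [r]-fibre inside [K]; covering [K] by finitely many open sets on which [r] is
    injective bounds the dimension. The neighbours of a compact [K'] are the
    products of a compact set of composable pairs of [K' * K], whence (H1); the
    pairs [(g, y)] with [(g y, y)] in a compact [C] are the image of a compact set
    under [(a, b) |-> (a b^-1, b)], whence properness; and the vertices are the
    translates of the units lying in [K], whence G-compactness. *)

From HB Require Import structures.
From mathcomp Require Import all_boot all_order all_algebra.
From mathcomp Require Import all_classical all_reals all_analysis.
Set Implicit Arguments. Unset Strict Implicit. Unset Printing Implicit Defensive.
Local Open Scope classical_set_scope.

Lemma closed_equalizer (T Y : topologicalType) (f g : T -> Y) :
  hausdorff_space Y -> continuous f -> continuous g -> closed [set t | f t = g t].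
Proof.
move=> hY cf cg t clt; apply: hY => A B nA nB.
have : nbhs t (f @^-1` A `&` g @^-1` B) by apply: filterI; [exact: cf|exact: cg].
by move=> /clt [t' [/= e [At' Bt']]]; exists (f t'); split => //; rewrite e.
Qed.

Lemma continuous_fst {T U : topologicalType} : continuous (@fst T U).
Proof. by move=> [a b]; apply: cvg_fst. Qed.

Lemma continuous_snd {T U : topologicalType} : continuous (@snd T U).
Proof. by move=> [a b]; apply: cvg_snd. Qed.

Lemma continuous_pair (T U V : topologicalType) (f : T -> U) (g : T -> V) :
  continuous f -> continuous g -> continuous (fun x => (f x, g x)).
Proof. by move=> cf cg x; apply: cvg_pair; [exact: cf | exact: cg]. Qed.

Lemma comp_continuous (T U V : topologicalType) (f : T -> U) (g : U -> V) :
  continuous f -> continuous g -> continuous (g \o f).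
Proof. by move=> cf cg x; apply: continuous_comp; [exact: cf | exact: cg]. Qed.

Lemma within_continuous_pair (T U V : topologicalType) (A : set T)
    (f : T -> U) (g : T -> V) :
  {within A, continuous f} -> {within A, continuous g} ->
  {within A, continuous (fun x => (f x, g x))}.
Proof.
move=> /subspace_continuousP cf /subspace_continuousP cg.
by apply/subspace_continuousP => x Ax; apply: cvg_pair; [exact: cf | exact: cg].
Qed.

Lemma continuous_within_comp (T U V : topologicalType) (A : set T) (B : set U)
    (f : T -> U) (g : U -> V) :
  continuous f -> f @` A `<=` B -> {within B, continuous g} ->
  {within A, continuous (g \o f)}.
Proof.
move=> cf fAB /subspace_continuousP cg; apply/subspace_continuousP => x Ax.
apply: cvg_trans (cg _ (fAB _ (imageP _ Ax))) => W /=.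
rewrite /within !nbhs_simpl /= => /(cf x); rewrite nbhs_simpl /=.
by apply: filterS => y /= Wfy Ay; exact: Wfy (fAB _ (imageP _ Ay)).
Qed.

Lemma cvg_within_continuous (L : Type) (F : set_system L) (T U : topologicalType)
    (A : set T) (h : T -> U) (x : L -> T) (p : T) : Filter F ->
  {within A, continuous h} -> A p -> (forall l, A (x l)) -> x @ F --> p ->
  h \o x @ F --> h p.
Proof.
move=> FF /subspace_continuousP ch Ap Ax xp.
apply: cvg_trans (ch _ Ap) => W /=; rewrite /within nbhs_simpl => /xp.
by rewrite nbhs_simpl /=; apply: filterS => l; apply.
Qed.

Definition net_filter (L : Type) (le : L -> L -> Prop) : set_system L :=
  filter_from [set: L] (fun l0 => [set l | le l0 l]).

Lemma net_filter_proper (L : Type) (le : L -> L -> Prop) :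
  directed_set le -> ProperFilter (net_filter le).
Proof.
move=> [[l0 _] refl trans dir].
apply: filter_from_proper; last by move=> l _; exists l; exact: refl.
apply: filter_from_filter; first by exists l0.
move=> a b _ _; have [c [ac bc]] := dir a b; exists c => // l /= cl.
by split; apply: trans cl.
Qed.

Lemma net_converges_cvg (L : Type) (le : L -> L -> Prop) (T : topologicalType)
    (x : L -> T) (y : T) :
  net_converges le x y -> x @ net_filter le --> y.
Proof. by move=> xy U /xy [l0 x_U]; exists l0. Qed.

(* The library proves [compact_cover] for pointed spaces only; [pointed_at x0]
   is [T] pointed at [x0]. *)
Section PointedAt.
Variable T : topologicalType.
Definition pointed_at (x0 : T) : Type := T.
HB.instance Definition _ x0 := Topological.on (pointed_at x0).
HB.instance Definition _ x0 := isPointed.Build (pointed_at x0) x0.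
End PointedAt.

Lemma compact_finite_subcover (T : topologicalType) (A : set T) (I : choiceType)
    (D : set I) (f : I -> set T) :
  compact A -> (forall i, D i -> open (f i)) -> A `<=` cover D f ->
  finite_subset_cover D f A.
Proof.
have [->|/set0P[x0 _]] := eqVneq A set0; first by exists finmap.fset0.
by rewrite -[compact A]/(@compact (pointed_at x0) A) compact_cover; apply.
Qed.

Lemma card_le_fibre_cover (T U : Type) (I : eqType) (f : T -> U) (V : I -> set T)
    (s : seq I) (S : set T) :
  (forall i, {in V i &, injective f}) -> S `<=` \bigcup_(i in [set` s]) V i ->
  (forall a b, S a -> S b -> f a = f b) -> (S #<= `I_(size s))%card.
Proof.
move=> injV Scov fS.
pose idx x := find (fun i => `[< V i x >]) s.
have has_idx x : S x -> has (fun i => `[< V i x >]) s.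
  by move=> /Scov [i si Vix]; apply/hasP; exists i => //; apply/asboolP.
apply/pcard_leP/injfunPex; exists idx => [x /has_idx|a b /set_mem Sa /set_mem Sb e].
  by rewrite has_find.
have [i0 _ _] := Scov a Sa.
move: (nth_find i0 (has_idx a Sa)) (nth_find i0 (has_idx b Sb)).
rewrite -/(idx a) -/(idx b) e => /asboolP Va /asboolP Vb.
by apply: (injV (nth i0 s (idx b))); rewrite ?inE //; exact: fS.
Qed.

Lemma compact_cover_injective (T U : topologicalType) (f : T -> U) (K : set T) :
  local_homeo f -> compact K ->
  exists (V : T -> set T) (s : seq T),
    (forall t, {in V t &, injective f}) /\ K `<=` \bigcup_(t in [set` s]) V t.
Proof.
move=> [_ lf] cK; have [V hV] := choice lf.
have [D _ KD] : finite_subset_cover [set: T] V K.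
  apply: compact_finite_subcover cK _ _ => [t _|t _]; first by case: (hV t).
  by exists t => //; case: (hV t).
by exists V, (finmap.enum_fset D); split => [t|]; first by case: (hV t).
Qed.

Section EtaleGroupoid.
Variables (G X : topologicalType) (r s : G -> X) (u : X -> G)
  (inv : G -> G) (mul : G -> G -> G).
Hypothesis EG : etale_groupoid r s u inv mul.

Lemma r_unit x : r (u x) = x. Proof. by case: EG => -[h _ _ _ _] _; case: (h x). Qed.
Lemma s_unit x : s (u x) = x. Proof. by case: EG => -[h _ _ _ _] _; case: (h x). Qed.
Lemma r_mul g h : s g = r h -> r (mul g h) = r g.
Proof. by case: EG => -[_ hh _ _ _] _ /hh []. Qed.
Lemma s_mul g h : s g = r h -> s (mul g h) = s h.
Proof. by case: EG => -[_ hh _ _ _] _ /hh []. Qed.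
Lemma mulA g h k : s g = r h -> s h = r k -> mul (mul g h) k = mul g (mul h k).
Proof. by case: EG => -[_ _ hh _ _] _; apply: hh. Qed.
Lemma mul_unitl g : mul (u (r g)) g = g.
Proof. by case: EG => -[_ _ _ hh _] _; case: (hh g). Qed.
Lemma mul_unitr g : mul g (u (s g)) = g.
Proof. by case: EG => -[_ _ _ hh _] _; case: (hh g). Qed.
Lemma r_inv g : r (inv g) = s g. Proof. by case: EG => -[_ _ _ _ hh] _; case: (hh g). Qed.
Lemma s_inv g : s (inv g) = r g. Proof. by case: EG => -[_ _ _ _ hh] _; case: (hh g). Qed.
Lemma mul_invr g : mul g (inv g) = u (r g).
Proof. by case: EG => -[_ _ _ _ hh] _; case: (hh g). Qed.
Lemma mul_invl g : mul (inv g) g = u (s g).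
Proof. by case: EG => -[_ _ _ _ hh] _; case: (hh g). Qed.

Lemma inv_unique g h : s g = r h -> mul g h = u (s h) -> g = inv h.
Proof.
move=> sgh gh1; have -> : g = mul g (mul h (inv h)) by rewrite mul_invr -sgh mul_unitr.
by rewrite -mulA ?r_inv // gh1 -(r_inv h) mul_unitl.
Qed.

Lemma invK g : inv (inv g) = g.
Proof. by symmetry; apply: inv_unique; rewrite ?r_inv // mul_invr s_inv. Qed.

Lemma mulK g h : s g = r h -> mul (inv g) (mul g h) = h.
Proof. by move=> e; rewrite -mulA ?r_inv ?s_inv // mul_invl e mul_unitl. Qed.

Lemma mulVK g h : r g = r h -> mul g (mul (inv g) h) = h.
Proof. by move=> e; rewrite -mulA ?r_inv ?s_inv // mul_invr e mul_unitl. Qed.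

Lemma invM g h : s g = r h -> inv (mul g h) = mul (inv h) (inv g).
Proof.
move=> sgh; symmetry; apply: inv_unique; first by rewrite s_mul ?r_inv ?s_inv ?r_mul.
by rewrite mulA ?s_inv ?r_inv ?r_mul // mulK // mul_invl s_mul.
Qed.

Lemma hausdorff_arrows : hausdorff_space G. Proof. by case: EG => _ [[]]. Qed.
Lemma hausdorff_units : hausdorff_space X. Proof. by case: EG => _ [_ []]. Qed.
Lemma continuous_r : continuous r. Proof. by case: EG => _ [_ _ []]. Qed.
Lemma continuous_s : continuous s. Proof. by case: EG => _ [_ _ []]. Qed.
Lemma continuous_u : continuous u. Proof. by case: EG => _ [_ _ []]. Qed.
Lemma continuous_inv : continuous inv. Proof. by case: EG => _ [_ _ []]. Qed.
Lemma continuous_mul :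
  {within [set p : G * G | s p.1 = r p.2], continuous (fun p => mul p.1 p.2)}.
Proof. by case: EG => _ []. Qed.
Lemma local_homeo_r : local_homeo r. Proof. by case: EG => _ []. Qed.

Lemma Delta_K_simplicial_complex K :
  G_simplicial_complex r s u mul r mul (Delta_K r inv mul K).
Proof.
split.
- split; first by case: EG => _ [].
  + exact: local_homeo_r.
  + exact: continuous_mul.
  + by move=> g y e; rewrite r_mul.
  + by split=> [|g h y sgh shy]; [exact: mul_unitl | rewrite mulA].
- by move=> d [].
- move=> d [_ [g0 dg0] dK]; exists (r g0) => g dg; exact: (dK g g0 dg dg0).1.
- move=> d d' [fd _ dK] d'd d'0; split=> //; first exact: sub_finite_set fd.
  by move=> g1 g2 /d'd d1 /d'd d2; apply: dK.
- move=> g d [fd [g0 dg0] dK] ds; split; first exact: finite_image.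
    by exists (mul g g0), g0.
  move=> _ _ [a da <-] [b db <-].
  have sa : s g = r a by rewrite (ds a da).
  have sb : s g = r b by rewrite (ds b db).
  rewrite !r_mul //; split=> //.
  by rewrite invM // mulA ?s_inv ?r_inv ?r_mul // mulK //; exact: (dK a b da db).2.
Qed.

Lemma Delta_K_set2 K y y' :
  Delta_K r inv mul K [set y; y'] <->
  [/\ r y = r y', K (mul (inv y) y'), K (mul (inv y') y), K (u (s y)) & K (u (s y'))].
Proof.
split=> [[_ _ dK]|[ryy' Kyy' Ky'y Ky Ky']].
  have [ryy' Kyy'] := dK y y' (or_introl erefl) (or_intror erefl).
  have [_ Ky'y] := dK y' y (or_intror erefl) (or_introl erefl).
  have [_ Ky] := dK y y (or_introl erefl) (or_introl erefl).
  have [_ Ky'] := dK y' y' (or_intror erefl) (or_intror erefl).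
  by split=> //; rewrite -mul_invl.
split; [exact: finite_set2 | by exists y; left |].
by move=> g1 g2 [->|->] [->|->]; rewrite ?mul_invl.
Qed.

Lemma Delta_K_H1 K : compact K -> H1 (Delta_K r inv mul K).
Proof.
move=> cK K' cK'.
have clKf (f : G * G -> G) : continuous f -> closed (f @^-1` K).
  move=> cf; apply: preimage_closed => [x _|]; first exact: cf.
  exact: compact_closed hausdorff_arrows cK.
pose T := K' `*` K `&` [set p : G * G | s p.1 = r p.2] `&` (inv \o snd) @^-1` K
  `&` (u \o s \o snd) @^-1` K `&` (u \o s \o fst) @^-1` K.
have cT : compact T.
  apply: compact_closedI;
    last exact: clKf (comp_continuous continuous_fst (comp_continuous continuous_s continuous_u)).
  apply: compact_closedI;
    last exact: clKf (comp_continuous continuous_snd (comp_continuous continuous_s continuous_u)).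
  apply: compact_closedI; last exact: clKf (comp_continuous continuous_snd continuous_inv).
  apply: compact_closedI; first exact: compact_setX.
  exact: closed_equalizer hausdorff_units
    (comp_continuous continuous_fst continuous_s) (comp_continuous continuous_snd continuous_r).
have -> : [set y | exists2 y', K' y' & Delta_K r inv mul K [set y; y']] =
    (fun p => mul p.1 p.2) @` T.
  apply/seteqP; split=> [y [y' K'y' /Delta_K_set2[ryy' Kyy' Ky'y Ky Ky']]|].
    exists (y', mul (inv y') y); last exact: mulVK.
    have sy'y : s (inv y') = r y by rewrite s_inv.
    split; [split; [split; [split|]|]|] => //=.
    - by rewrite r_mul ?r_inv.
    - by rewrite invM // invK.
    - by rewrite s_mul.
  move=> _ [[g k] [[[[[K'g Kk] /= sgk] Kik] Kusk] Kusg] <-] /=.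
  exists g => //; apply/Delta_K_set2; split.
  - by rewrite r_mul.
  - by rewrite invM // mulA ?s_inv ?r_inv ?r_mul // mul_invl sgk -(s_inv k) mul_unitr.
  - by rewrite mulK.
  - by rewrite s_mul.
  - by [].
apply: continuous_compact cT; apply: continuous_subspaceW continuous_mul.
by move=> p [[[[]]]].
Qed.

Lemma Delta_K_H2 K : closed K -> H2 (Delta_K r inv mul K).
Proof.
move=> clK k L le net lim dirL conv simplex.
have FF := net_filter_proper dirL.
have cvg_net i := net_converges_cvg (conv i).
have edge i j l : r (net i l) = r (net j l) /\ K (mul (inv (net i l)) (net j l)).
  by have [_ _ dK] := simplex l; apply: dK; [exists i | exists j].
split; [exact: finite_image finite_finset | by exists (lim ord0), ord0 |].
move=> _ _ [i _ <-] [j _ <-].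
have rij : r (lim i) = r (lim j).
  apply: (@cvg_unique _ hausdorff_units ((r \o net i) @ net_filter le) _).
    exact: continuous_cvg _ (@continuous_r (lim i)) (cvg_net i).
  have -> : r \o net i = r \o net j by apply: funext => l; exact: (edge i j l).1.
  exact: continuous_cvg _ (@continuous_r (lim j)) (cvg_net j).
split=> //.
apply: (@closed_cvg _ _ _ FF (fun l => mul (inv (net i l)) (net j l)) K clK).
  by apply: nearW => l; exact: (edge i j l).2.
apply: (cvg_within_continuous (h := fun p => mul p.1 p.2)
  (x := fun l => (inv (net i l), net j l)) (p := (inv (lim i), lim j)) _ continuous_mul).
- by rewrite /= s_inv.
- by move=> l; rewrite /= s_inv (edge i j l).1.
- apply: cvg_pair (cvg_net j).
  exact: continuous_cvg _ (@continuous_inv (lim i)) (cvg_net i).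
Qed.

Lemma mul_proper_action : proper_action s r mul.
Proof.
move=> C cC.
pose C' := C `&` [set q : G * G | s q.1 = s q.2].
pose phi (q : G * G) := (mul q.1 (inv q.2), q.2).
have -> : [set p : G * G | s p.1 = r p.2 /\ C (mul p.1 p.2, p.2)] = phi @` C'.
  apply/seteqP; split=> [[g y] /= [sgy Cp]|].
    exists (mul g y, y); first by split=> //=; rewrite s_mul.
    by rewrite /phi /= mulA ?r_inv ?s_mul // mul_invr -sgy mul_unitr.
  move=> _ [[a b] [Cab /= sab] <-] /=; split; first by rewrite s_mul ?r_inv ?s_inv.
  by rewrite mulA ?r_inv ?s_inv // mul_invl -sab mul_unitr.
apply: continuous_compact; last first.
  apply: compact_closedI => //; apply: closed_equalizer hausdorff_units _ _.
  - exact: comp_continuous continuous_fst continuous_s.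
  - exact: comp_continuous continuous_snd continuous_s.
apply: within_continuous_pair; last exact/continuous_subspaceT/continuous_snd.
apply: (continuous_within_comp (g := fun p => mul p.1 p.2)
  (f := fun q : G * G => (q.1, inv q.2)) _ _ continuous_mul).
- exact: continuous_pair continuous_fst (comp_continuous continuous_snd continuous_inv).
- by move=> _ [[a b] [_ /= sab] <-]; rewrite /= r_inv.
Qed.

Lemma Delta_K_G_compact K : compact K -> G_compact s r mul (Delta_K r inv mul K).
Proof.
move=> cK; exists (K `&` [set c | c = u (r c)]).
  apply: compact_closedI => //; apply: closed_equalizer hausdorff_arrows _ _.
  - by move=> x; apply: cvg_id.
  - exact: comp_continuous continuous_r continuous_u.
apply/seteqP; split=> y /=.
  move=> [_ _ dK]; have := (dK y y erefl erefl).2; rewrite mul_invl => Ky.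
  exists y, (u (s y)); split; last by rewrite mul_unitr.
  - by split=> //; rewrite r_unit.
  - by rewrite r_unit.
move=> [g [c [[Kc ec] sgc ->]]]; split; [exact: finite_set1 | by exists (mul g c) |].
move=> g1 g2 -> ->; split=> //; rewrite mul_invl s_mul //.
have -> : s c = r c by rewrite ec s_unit r_unit.
by rewrite -ec.
Qed.

Lemma Delta_K_finite_dimensional K :
  compact K -> finite_dimensional (Delta_K r inv mul K).
Proof.
move=> cK; have [V [sq [injV KV]]] := compact_cover_injective local_homeo_r cK.
exists (size sq) => d [_ [g0 dg0] dK].
have r_d g : d g -> r g0 = r g by move=> dg; exact: (dK g0 g dg0 dg).1.
have s_inv_d g : d g -> s (inv g0) = r g by rewrite s_inv; exact: r_d.
have inj_d : {in d &, injective (mul (inv g0))}.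
  move=> a b /set_mem da /set_mem db e.
  by rewrite -(mulVK (r_d a da)) e (mulVK (r_d b db)).
rewrite -(card_le_eql (inj_card_eq inj_d)).
apply: (card_le_fibre_cover (f := r) injV).
  by move=> _ [g dg <-]; apply: KV; exact: (dK g0 g dg0 dg).2.
by move=> _ _ [a da <-] [b db <-]; rewrite (r_mul (s_inv_d a da)) (r_mul (s_inv_d b db)).
Qed.

End EtaleGroupoid.

Unset Implicit Arguments.

Theorem proposition3p26 (G X : topologicalType) (r s : G -> X) (u : X -> G)
    (inv : G -> G) (mul : G -> G -> G) (K : set G) :
  etale_groupoid r s u inv mul -> compact K ->
  [/\ G_simplicial_complex r s u mul r mul (Delta_K r inv mul K)
        /\ finite_dimensional (Delta_K r inv mul K),
      H1 (Delta_K r inv mul K) /\ H2 (Delta_K r inv mul K) &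
      proper_action s r mul /\ G_compact s r mul (Delta_K r inv mul K)].
Proof.
move=> EG cK; have clK := compact_closed (hausdorff_arrows EG) cK.
split; split.
- exact: (Delta_K_simplicial_complex EG K).
- exact: (Delta_K_finite_dimensional EG cK).
- exact: (Delta_K_H1 EG cK).
- exact: (Delta_K_H2 EG clK).
- exact: (mul_proper_action EG).
- exact: (Delta_K_G_compact EG cK).
Qed.
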